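(* Let $x,y,z$ be nodes of a finite, connected, unweighted, undirected graph, and suppose some node $c$ is a Condorcet winner for $\{x,y,z\}$. Then $c$ lies on a shortest path between $x$ and $y$, on a shortest path between $x$ and $z$, and on a shortest path between $y$ and $z$.
   Context: $d$ is the shortest-path distance. A node $c$ is a Condorcet winner for a set $S$ if for every other node $y'$, $\lvert\{u\in S: d(u,c)<d(u,y')\}\rvert > \lvert\{u\in S: d(u,y')<d(u,c)\}\rvert$. *)

From mathcomp Require Import all_boot.
Set Implicit Arguments. Unset Strict Implicit. Unset Printing Implicit Defensive.

Section Graph.
Variables (T : finType) (e : rel T).

Definition simple_graph := symmetric e /\ irreflexive e.
Definition connected_graph := forall u v : T, connect e u v.

Definition has_walk (n : nat) (u v : T) : bool :=
  [exists p : n.-tuple T, path e u p && (last u p == v)].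

(* shortest-path distance: least n with a walk of length n
   (searched in 0 .. #|T|-1, which suffices in a connected graph) *)
Definition dist (u v : T) : nat :=
  find (fun n => has_walk n u v) (iota 0 #|T|).

Definition on_shortest_path (c u v : T) : Prop :=
  exists p : seq T, [/\ path e u p, last u p = v, size p = dist u v
                      & c \in u :: p].

Definition condorcet_winner (S : {set T}) (c : T) : Prop :=
  forall y' : T, y' != c ->
    #|[set u in S | dist u c < dist u y']| > #|[set u in S | dist u y' < dist u c]|.
End Graph.

(** If [c] is off every geodesic from [a] to [b], walk from [a] towards [b]
    along a geodesic for [min (dist a c) (dist a b)] steps, reaching [w].
    Then [a] weakly prefers [w] to [c] and [b] strictly prefers [w] to [c],
    so at most the third voter prefers [c] to [w], while [b] prefers [w]:
    [c] cannot beat [w]. *)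
From mathcomp Require Import all_boot.
From mathcomp Require Import zify.

Section Distance.
Variables (T : finType) (e : rel T).

Lemma has_walkP n u v :
  reflect (exists p, [/\ path e u p, last u p = v & size p = n])
          (has_walk e n u v).
Proof.
apply: (iffP existsP) => [[p /andP[pp /eqP lp]] | [p [pp lp sp]]].
  by exists (val p); rewrite size_tuple.
have sp' : size p == n by apply/eqP.
by exists (Tuple sp'); rewrite /= pp lp eqxx.
Qed.

Lemma dist_le_walk n u v : has_walk e n u v -> dist e u v <= n.
Proof.
move=> walk_n; rewrite leqNgt; apply/negP => n_lt_dist.
have [n_small | n_large] := ltnP n #|T|.
  by have := before_find 0 n_lt_dist; rewrite nth_iota // walk_n.
have := find_size (fun n => has_walk e n u v) (iota 0 #|T|).
by rewrite size_iota -/(dist e u v); lia.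
Qed.

Hypothesis e_connected : connected_graph e.

Lemma short_walk u v : exists2 n, n < #|T| & has_walk e n u v.
Proof.
have /connectP[p pp lp] := e_connected u v.
case: (shortenP pp) lp => q pq uq _ lq.
exists (size q); last by apply/has_walkP; exists q.
by have := max_card (mem (u :: q)); rewrite (card_uniqP uq) /=.
Qed.

Lemma dist_walk u v : has_walk e (dist e u v) u v.
Proof.
have [n n_small walk_n] := short_walk u v.
have has_n : has (fun n => has_walk e n u v) (iota 0 #|T|).
  by apply/hasP; exists n; rewrite // mem_iota.
have := nth_find 0 has_n; rewrite nth_iota //.
by move: has_n; rewrite has_find size_iota.
Qed.

Lemma shortest_walk u v :
  exists p, [/\ path e u p, last u p = v & size p = dist e u v].
Proof. exact/has_walkP/dist_walk. Qed.

Lemma dist_triangle a c b : dist e a b <= dist e a c + dist e c b.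
Proof.
have [p [pp lp sp]] := shortest_walk a c.
have [q [pq lq sq]] := shortest_walk c b.
apply: dist_le_walk; apply/has_walkP; exists (p ++ q).
by rewrite cat_path last_cat lp pp pq size_cat sp sq.
Qed.

Lemma dist_split a b k : k <= dist e a b ->
  exists w, dist e a w <= k /\ dist e w b <= dist e a b - k.
Proof.
move=> k_le; have [p [pp lp sp]] := shortest_walk a b.
move: pp; rewrite -(cat_take_drop k p) cat_path => /andP[p_take p_drop].
exists (last a (take k p)); split; apply: dist_le_walk; apply/has_walkP.
  by exists (take k p); rewrite size_takel ?sp.
by exists (drop k p); rewrite -last_cat cat_take_drop size_drop sp.
Qed.

Lemma on_shortest_path_dist c a b :
  dist e a c + dist e c b = dist e a b -> on_shortest_path e c a b.
Proof.
move=> dist_add; have [p [pp lp sp]] := shortest_walk a c.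
have [q [pq lq sq]] := shortest_walk c b.
exists (p ++ q); split.
- by rewrite cat_path pp lp pq.
- by rewrite last_cat lp.
- by rewrite size_cat sp sq.
by rewrite -cat_cons mem_cat -lp mem_last.
Qed.

Hypothesis e_sym : symmetric e.

Lemma distC u v : dist e u v = dist e v u.
Proof.
suff dist_le a b : dist e b a <= dist e a b by apply/eqP; rewrite eqn_leq !dist_le.
have [p [pp lp sp]] := shortest_walk a b.
apply: dist_le_walk; apply/has_walkP; exists (rev (belast a p)); split.
- by rewrite -lp rev_path (eq_path (e' := e)) // => s t; apply: e_sym.
- by rewrite -lp; case: (p) => //= s q; rewrite rev_cons last_rcons.
- by rewrite size_rev size_belast.
Qed.

Lemma closer_point_off_shortest_path a b c :
  dist e a b < dist e a c + dist e c b ->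
  exists w, dist e a w <= dist e a c /\ dist e b w < dist e b c.
Proof.
move=> off_path.
have [w [aw wb]] := @dist_split a b _ (geq_minr (dist e a c) _).
exists w; split; first exact: leq_trans aw (geq_minl _ _).
rewrite (distC w b) in wb; rewrite (distC c b) in off_path.
by have := dist_triangle a b c; lia.
Qed.

Lemma condorcet_winner_on_shortest_path (S : {set T}) a b v c :
  a \in S -> b \in S -> S \subset [set a; b; v] ->
  condorcet_winner e S c -> on_shortest_path e c a b.
Proof.
move=> aS bS S_sub c_wins.
have [off_path | too_long | on_path] := ltngtP (dist e a b) (dist e a c + dist e c b).
- have [w [aw bw]] := @closer_point_off_shortest_path a b c off_path.
  have w_neq_c : w != c by apply: contraTneq bw => ->; rewrite ltnn.
  have := c_wins w w_neq_c; rewrite ltnNge => /negP; case.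
  have pro_c_sub : [set u in S | dist e u c < dist e u w] \subset [set v].
    apply/subsetP => u; rewrite inE => /andP[uS u_pro_c].
    have := subsetP S_sub u uS; rewrite !inE => /orP[/orP[]|] /eqP u_eq //.
      by rewrite u_eq ltnNge aw in u_pro_c.
    by rewrite u_eq ltnNge ltnW in u_pro_c.
  apply: leq_trans (subset_leq_card pro_c_sub) _; rewrite cards1.
  by apply/card_gt0P; exists b; rewrite inE bS bw.
- by have := dist_triangle a c b; lia.
by apply: on_shortest_path_dist; rewrite on_path.
Qed.

End Distance.

Theorem lemmaE1 (T : finType) (e : rel T) (x y z c : T) :
  simple_graph e -> connected_graph e ->
  condorcet_winner e [set x; y; z] c ->
  [/\ on_shortest_path e c x y, on_shortest_path e c x z
    & on_shortest_path e c y z].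
Proof.
move=> [e_sym _] e_connected c_wins.
have winner_on_path := @condorcet_winner_on_shortest_path T e e_connected e_sym.
split; [ apply: (winner_on_path _ _ _ z) c_wins
       | apply: (winner_on_path _ _ _ y) c_wins
       | apply: (winner_on_path _ _ _ x) c_wins ];
  rewrite ?inE ?eqxx ?orbT //;
  apply/subsetP => u; rewrite !inE => /orP[/orP[]|] /eqP->; by rewrite eqxx ?orbT.
Qed.
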